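(* Let $W:\mathcal X\to\mathcal Y$ be a DMC with a fixed input distribution, let $r>0$, and let $\alpha,\beta\in\mathcal Y_{\mathrm{small}}$ be distinct output letters such that $\boldsymbol\beta\in\mathcal C(\boldsymbol\alpha,r)$. Then the channel $Q$ obtained by merging $\alpha$ and $\beta$ satisfies $I(W)-I(Q)\le \frac{4|\mathcal X|r}{|\mathcal Y|}$.
   Context: $\mathcal X,\mathcal Y$ finite disjoint sets, $|\mathcal X|\ge2$; $W$ a DMC with transition probabilities $W(y|x)$; input distribution $\pi(x)>0$ fixed, output probabilities $\pi(y)=\sum_x\pi(x)W(y|x)>0$; $I(\cdot)$ is input–output mutual information (natural log). Merging $\alpha,\beta$ gives $Q$ with output alphabet $(\mathcal Y\setminus\{\alpha,\beta\})\cup\{\gamma\}$, $Q(\gamma|x)=W(\alpha|x)+W(\beta|x)$, $Q(y|x)=W(y|x)$ otherwise. $\mathcal Y_{\mathrm{small}}=\{y\in\mathcal Y:\pi(y)\le 2/|\mathcal Y|\}$. For an output letter $\alpha$, $\boldsymbol\alpha=(\alpha_x)_{x\in\mathcal X}$ with $\alpha_x=W(x|\alpha)=\pi(x)W(\alpha|x)/\pi(\alpha)$ is its posterior probability vector. $\mathbb R^{\mathcal X}_K=\{\boldsymbol\zeta\in\mathbb R^{\mathcal X}:\sum_x\zeta_x=1\}$. $x_{\max}=x_{\max}(\boldsymbol\alpha)$ is an index of a largest entry of $\boldsymbol\alpha$ (ties broken arbitrarily but consistently), $\mathcal X'=\mathcal X\setminus\{x_{\max}\}$, $\omega_\downarrow(a,r)=\max(\sqrt{r^2/4+ar}-r/2,\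 r)$, $\omega'(a,r)=\omega_\downarrow(a,r)/(|\mathcal X|-1)$, and $\mathcal C(\boldsymbol\alpha,r)=\{\boldsymbol\zeta\in\mathbb R^{\mathcal X}_K: |\zeta_x-\alpha_x|\le\omega'(\alpha_x,r)\ \forall x\in\mathcal X'\}$. *)

From Stdlib Require Import Reals List.
Import ListNotations.
Open Scope R_scope.

Definition lsum {A : Type} (l : list A) (f : A -> R) : R :=
  fold_right (fun a acc => f a + acc) 0 l.

Definition inputs (m : nat) : list nat := seq 0 m.

(* Output probability pi(y) = sum_x pi(x) W(y|x); the channel W is given as
   W y x = W(y|x). *)
Definition out_prob {B : Type} (m : nat) (pi : nat -> R) (W : B -> nat -> R)
  (y : B) : R :=
  lsum (inputs m) (fun x => pi x * W y x).

(* One term pi(x) W(y|x) ln(W(y|x)/pi(y)), with the convention 0 ln 0 = 0. *)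
Definition mi_term (px wyx py : R) : R :=
  if Req_EM_T wyx 0 then 0 else px * wyx * ln (wyx / py).

Definition mutual_info {B : Type} (m : nat) (pi : nat -> R)
  (outs : list B) (W : B -> nat -> R) : R :=
  lsum (inputs m) (fun x =>
    lsum outs (fun y => mi_term (pi x) (W y x) (out_prob m pi W y))).

(* Merged channel Q: output alphabet (Y \ {alpha,beta}) ∪ {gamma},
   represented as option nat with None = gamma. *)
Definition merged_outs (n alpha beta : nat) : list (option nat) :=
  None :: map Some (filter (fun y => andb (negb (Nat.eqb y alpha)) (negb (Nat.eqb y beta)))
                           (seq 0 n)).

Definition merge (W : nat -> nat -> R) (alpha beta : nat) : option nat -> nat -> R :=
  fun y x => match y with
             | None => W alpha x + W beta x
             | Some y' => W y' x
             end.

(* Posterior probability vector of output letter a: a_x = W(x|a). *)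
Definition posterior (m : nat) (pi : nat -> R) (W : nat -> nat -> R) (a : nat)
  (x : nat) : R :=
  pi x * W a x / out_prob m pi W a.

Definition omega_down (a r : R) : R :=
  Rmax (sqrt (r ^ 2 / 4 + a * r) - r / 2) r.

Definition omega' (m : nat) (a r : R) : R := omega_down a r / (INR m - 1).

Definition is_argmax (m : nat) (va : nat -> R) (xmax : nat) : Prop :=
  (xmax < m)%nat /\ forall x, (x < m)%nat -> va x <= va xmax.

Definition in_C (m : nat) (va vz : nat -> R) (xmax : nat) (r : R) : Prop :=
  lsum (inputs m) vz = 1 /\
  forall x, (x < m)%nat -> x <> xmax -> Rabs (vz x - va x) <= omega' m (va x) r.

(* Merging alpha and beta only changes the terms of I(W) at these two outputs.
   For a fixed input x, with posteriors a = alpha_x, b = beta_x and output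
   probabilities pa = pi(alpha), pb = pi(beta), the loss is
   a convexity gap of t ln t, which [ln u <= u - 1] bounds by the chi-square
   expression pa pb (a - b)^2 / (pa a + pb b).  The constraint set C(alpha, r)
   gives |b - a| <= omega_down(a, r) for every x (for x_max because both
   posteriors sum to 1 and omega_down is monotone), and this forces
   (a - b)^2 <= r max(a, b), so each input loses at most (pa + pb) r.  Summing
   over the |X| inputs and using pa, pb <= 2/|Y| gives the bound. *)

From Stdlib Require Import Reals List Lra Lia Psatz.
Open Scope R_scope.

Lemma lsum_cons {A} (a : A) l f : lsum (a :: l) f = f a + lsum l f.
Proof. reflexivity. Qed.

Lemma lsum_ext {A} (l : list A) f g :
  (forall x, In x l -> f x = g x) -> lsum l f = lsum l g.
Proof.
  induction l as [|a l IH]; intros H; simpl; [reflexivity|].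
  rewrite H by (left; reflexivity). rewrite IH; [reflexivity|].
  intros; apply H; right; assumption.
Qed.

Lemma lsum_plus {A} (l : list A) f g :
  lsum l (fun x => f x + g x) = lsum l f + lsum l g.
Proof. induction l; simpl; [lra|]. rewrite IHl; lra. Qed.

Lemma lsum_minus {A} (l : list A) f g :
  lsum l (fun x => f x - g x) = lsum l f - lsum l g.
Proof. induction l; simpl; [lra|]. rewrite IHl; lra. Qed.

Lemma lsum_div {A} (l : list A) f c :
  lsum l (fun x => f x / c) = lsum l f / c.
Proof. induction l; simpl; unfold Rdiv in *; [lra|]. rewrite IHl; lra. Qed.

Lemma lsum_le {A} (l : list A) f g :
  (forall x, In x l -> f x <= g x) -> lsum l f <= lsum l g.
Proof.
  induction l as [|a l IH]; intros H; simpl; [lra|].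
  apply Rplus_le_compat; [apply H; left; reflexivity|].
  apply IH; intros; apply H; right; assumption.
Qed.

Lemma Rabs_lsum {A} (l : list A) f :
  Rabs (lsum l f) <= lsum l (fun x => Rabs (f x)).
Proof.
  induction l; simpl; [rewrite Rabs_R0; lra|].
  eapply Rle_trans; [apply Rabs_triang | lra].
Qed.

Lemma lsum_const {A} (l : list A) c : lsum l (fun _ => c) = INR (length l) * c.
Proof. induction l; simpl length; [simpl; lra|]. rewrite lsum_cons, IHl, S_INR. lra. Qed.

Lemma lsum_map {A B} (h : A -> B) l g : lsum (map h l) g = lsum l (fun x => g (h x)).
Proof. induction l; simpl; [reflexivity|]. rewrite IHl; reflexivity. Qed.

Lemma lsum_pick (l : list nat) a g : NoDup l -> In a l ->
  lsum l (fun y => if Nat.eqb y a then g y else 0) = g a.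
Proof.
  induction l as [|y l IH]; intros Hnd Ha; [destruct Ha|].
  apply NoDup_cons_iff in Hnd as [Hy Hnd]. rewrite lsum_cons.
  destruct (Nat.eqb_spec y a) as [<-|Hne].
  - rewrite (lsum_ext _ _ (fun _ => 0)), lsum_const; [lra|].
    intros x Hx. destruct (Nat.eqb_spec x y); [subst; contradiction | reflexivity].
  - destruct Ha as [->|Ha]; [contradiction|]. rewrite IH by assumption. lra.
Qed.

Lemma lsum_split_at (l : list nat) k f : NoDup l -> In k l ->
  lsum l f = f k + lsum l (fun y => if Nat.eqb y k then 0 else f y).
Proof.
  intros Hnd Hk. rewrite <- (lsum_pick l k f Hnd Hk), <- lsum_plus.
  apply lsum_ext; intros y _. destruct (Nat.eqb y k); lra.
Qed.

Lemma lsum_split_pair (l : list nat) a b f : NoDup l -> In a l -> In b l -> a <> b ->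
  lsum l f = f a + f b +
    lsum (filter (fun y => andb (negb (Nat.eqb y a)) (negb (Nat.eqb y b))) l) f.
Proof.
  intros Hnd Ha Hb Hab.
  rewrite <- (lsum_pick l a f), <- (lsum_pick l b f) by assumption.
  clear Hnd Ha Hb. induction l as [|y l IH]; simpl; [lra|].
  destruct (Nat.eqb_spec y a), (Nat.eqb_spec y b); simpl; subst; try congruence;
    rewrite IH; try rewrite lsum_cons; lra.
Qed.

Lemma ln_sub_le u v : 0 < u -> 0 < v -> ln u - ln v <= u / v - 1.
Proof.
  intros Hu Hv.
  replace u with (v * (u / v)) at 1 by (field; lra).
  rewrite ln_mult by (try apply Rdiv_lt_0_compat; assumption).
  pose proof (exp_ineq1_le (ln (u / v))) as E.
  rewrite exp_ln in E by (apply Rdiv_lt_0_compat; assumption). lra.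
Qed.

Lemma mi_term_sub_le p w q M : 0 < p -> 0 <= w -> 0 < q -> 0 < M ->
  mi_term p w q - p * w * ln M <= p * w * (w / q / M - 1).
Proof.
  intros Hp Hw Hq HM. unfold mi_term.
  destruct (Req_EM_T w 0) as [->|Hw0]; [lra|].
  pose proof (ln_sub_le (w / q) M ltac:(apply Rdiv_lt_0_compat; lra) HM) as Hln.
  apply Rmult_le_compat_l with (r := p * w) in Hln; nra.
Qed.

Lemma Rmax_weighted_le pa pb a b : 0 <= pa -> 0 <= pb -> 0 <= a -> 0 <= b ->
  pa * pb * Rmax a b <= (pa + pb) * (pa * a + pb * b).
Proof.
  intros. assert (0 <= pa * a) by nra. assert (0 <= pb * b) by nra.
  unfold Rmax; destruct (Rle_dec a b); nra.
Qed.

Section SingleInput.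

Variables (p wa wb pa pb : R).
Hypotheses (Hp : 0 < p) (Hwa : 0 <= wa) (Hwb : 0 <= wb) (Hpa : 0 < pa) (Hpb : 0 < pb).

Let a := p * wa / pa.
Let b := p * wb / pb.

Lemma a_nonneg : 0 <= a.
Proof. unfold a. apply Rle_mult_inv_pos; nra. Qed.

Lemma b_nonneg : 0 <= b.
Proof. unfold b. apply Rle_mult_inv_pos; nra. Qed.

Definition merge_loss : R :=
  mi_term p wa pa + mi_term p wb pb - mi_term p (wa + wb) (pa + pb).

(* Both terms are bounded via [ln u <= u - 1] against the merged likelihood
   ratio M; the resulting sum simplifies to the chi-square expression. *)
Lemma merge_loss_chi2 : 0 < wa + wb ->
  merge_loss * (p * (wa + wb)) <= pa * pb * (a - b) ^ 2.
Proof.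
  intros Hw. set (M := (wa + wb) / (pa + pb)).
  assert (HM : 0 < M) by (apply Rdiv_lt_0_compat; lra).
  assert (Hmerged : mi_term p (wa + wb) (pa + pb) = p * (wa + wb) * ln M).
  { unfold mi_term. destruct (Req_EM_T (wa + wb) 0); [lra | reflexivity]. }
  pose proof (mi_term_sub_le p wa pa M Hp Hwa Hpa HM) as La.
  pose proof (mi_term_sub_le p wb pb M Hp Hwb Hpb HM) as Lb.
  set (E := p * wa * (wa / pa / M - 1) + p * wb * (wb / pb / M - 1)).
  assert (HE : E * (p * (wa + wb)) = pa * pb * (a - b) ^ 2)
    by (unfold E, M, a, b; field; lra).
  rewrite <- HE. apply Rmult_le_compat_r; [nra|].
  unfold merge_loss, E. rewrite Hmerged. lra.
Qed.

Lemma sqr_sub_le_r_Rmax r : 0 < r -> Rabs (b - a) <= omega_down a r ->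
  (a - b) ^ 2 <= r * Rmax a b.
Proof.
  intros Hr Hd. pose proof a_nonneg. pose proof b_nonneg.
  pose proof (Rmax_l a b). pose proof (Rmax_r a b).
  rewrite <- pow2_abs, Rabs_minus_sym. set (d := Rabs (b - a)) in *.
  assert (Hd0 : 0 <= d) by apply Rabs_pos.
  unfold omega_down in Hd. apply Rmax_Rle in Hd as [Hds|Hdr].
  - (* (d + r/2)^2 <= r^2/4 + a r, hence d^2 <= a r - r d *)
    set (s := sqrt (r ^ 2 / 4 + a * r)) in Hds.
    assert (Hs : s * s = r ^ 2 / 4 + a * r) by (apply sqrt_sqrt; nra).
    assert ((d + r / 2) * (d + r / 2) <= s * s) by (apply Rmult_le_compat; lra).
    nra.
  - assert (d <= Rmax a b) by (unfold d; apply Rabs_le; lra).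
    nra.
Qed.

Lemma merge_loss_le r : 0 < r -> Rabs (b - a) <= omega_down a r ->
  merge_loss <= (pa + pb) * r.
Proof.
  intros Hr Hd.
  destruct (Req_dec (wa + wb) 0) as [Hw0|Hw0].
  { unfold merge_loss, mi_term.
    destruct (Req_EM_T wa 0), (Req_EM_T wb 0), (Req_EM_T (wa + wb) 0); nra. }
  assert (Hw : 0 < p * (wa + wb)) by (apply Rmult_lt_0_compat; lra).
  apply Rmult_le_reg_r with (1 := Hw). eapply Rle_trans; [apply merge_loss_chi2; lra|].
  replace (p * (wa + wb)) with (pa * a + pb * b) by (unfold a, b; field; lra).
  pose proof (Rmax_weighted_le pa pb a b ltac:(lra) ltac:(lra) a_nonneg b_nonneg) as Hmax.
  pose proof (sqr_sub_le_r_Rmax r Hr Hd) as Hsq.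
  apply Rmult_le_compat_l with (r := pa * pb) in Hsq; nra.
Qed.

End SingleInput.

Lemma omega_down_ge_r a r : r <= omega_down a r.
Proof. apply Rmax_r. Qed.

Lemma omega_down_le_compat a b r : 0 <= r -> a <= b -> omega_down a r <= omega_down b r.
Proof.
  intros Hr Hab. apply Rle_max_compat_r, Rplus_le_compat_r, sqrt_le_1_alt. nra.
Qed.

Lemma INR_pred_ge_1 m : (2 <= m)%nat -> 1 <= INR m - 1.
Proof. intros Hm. apply (le_INR 2) in Hm. simpl in Hm. lra. Qed.

Lemma omega'_mul_pred m a r : (2 <= m)%nat -> omega' m a r * (INR m - 1) = omega_down a r.
Proof. intros Hm. pose proof (INR_pred_ge_1 m Hm). unfold omega'. field. lra. Qed.

Lemma omega'_le_omega_down m a r : (2 <= m)%nat -> 0 <= r -> omega' m a r <= omega_down a r.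
Proof.
  intros Hm Hr. pose proof (omega'_mul_pred m a r Hm). pose proof (INR_pred_ge_1 m Hm).
  pose proof (omega_down_ge_r a r). nra.
Qed.

Lemma omega'_le_compat m a b r : (2 <= m)%nat -> 0 <= r -> a <= b ->
  omega' m a r <= omega' m b r.
Proof.
  intros Hm Hr Hab. pose proof (INR_pred_ge_1 m Hm). unfold omega', Rdiv.
  apply Rmult_le_compat_r; [left; apply Rinv_0_lt_compat; lra|].
  apply omega_down_le_compat; assumption.
Qed.

(* The coordinate x_max is unconstrained in C(alpha, r); it is controlled
   because both vectors sum to 1 and alpha_x <= alpha_{x_max}. *)
Lemma in_C_Rabs_sub_le m va vz xmax r : (2 <= m)%nat -> 0 <= r ->
  lsum (inputs m) va = 1 -> is_argmax m va xmax -> in_C m va vz xmax r ->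
  forall x, (x < m)%nat -> Rabs (vz x - va x) <= omega_down (va x) r.
Proof.
  intros Hm Hr Hva [Hxm Hmax] [Hvz Hc] x Hx.
  destruct (Nat.eq_dec x xmax) as [->|Hne].
  2: { eapply Rle_trans; [apply Hc; assumption | apply omega'_le_omega_down; assumption]. }
  assert (Hxm' : In xmax (seq 0 m)) by (apply in_seq; lia).
  set (d := fun y => vz y - va y).
  assert (Hd : lsum (seq 0 m) d = 0) by (unfold d; rewrite lsum_minus; unfold inputs in *; lra).
  rewrite (lsum_split_at _ xmax d (seq_NoDup m 0) Hxm') in Hd.
  change (vz xmax - va xmax) with (d xmax).
  replace (d xmax) with (- lsum (seq 0 m) (fun y => if Nat.eqb y xmax then 0 else d y)) by lra.
  rewrite Rabs_Ropp. eapply Rle_trans; [apply Rabs_lsum|].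
  set (c := omega' m (va xmax) r).
  eapply Rle_trans with (lsum (seq 0 m) (fun y => if Nat.eqb y xmax then 0 else c)).
  - apply lsum_le. intros y Hy. apply in_seq in Hy.
    destruct (Nat.eqb_spec y xmax); [rewrite Rabs_R0; lra|].
    eapply Rle_trans; [apply Hc; [lia | assumption]|].
    apply omega'_le_compat; [assumption | assumption | apply Hmax; lia].
  - pose proof (lsum_split_at _ xmax (fun _ => c) (seq_NoDup m 0) Hxm') as Hs.
    rewrite lsum_const, length_seq in Hs.
    pose proof (omega'_mul_pred m (va xmax) r Hm). unfold c in *. lra.
Qed.

Lemma posterior_sum m pi W a : 0 < out_prob m pi W a ->
  lsum (inputs m) (posterior m pi W a) = 1.
Proof.
  intros Ha. unfold posterior.
  rewrite (lsum_div _ (fun x => pi x * W a x)). fold (out_prob m pi W a).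
  field. lra.
Qed.

Lemma out_prob_merged m pi W a b :
  out_prob m pi (merge W a b) None = out_prob m pi W a + out_prob m pi W b.
Proof. unfold out_prob. rewrite <- lsum_plus. apply lsum_ext; intros x _. simpl. ring. Qed.

Lemma mutual_info_merge_loss m n pi W a b :
  (a < n)%nat -> (b < n)%nat -> a <> b ->
  mutual_info m pi (seq 0 n) W - mutual_info m pi (merged_outs n a b) (merge W a b)
  = lsum (inputs m) (fun x =>
      merge_loss (pi x) (W a x) (W b x) (out_prob m pi W a) (out_prob m pi W b)).
Proof.
  intros Ha Hb Hab. unfold mutual_info, merge_loss. rewrite <- lsum_minus.
  apply lsum_ext; intros x _.
  rewrite (lsum_split_pair _ a b) by (try apply seq_NoDup; try apply in_seq; lia).
  unfold merged_outs. rewrite lsum_cons, lsum_map, out_prob_merged.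
  unfold out_prob; cbn [merge]. ring.
Qed.

Theorem corollary4
  (m n : nat) (pi : nat -> R) (W : nat -> nat -> R) (r : R)
  (alpha beta xmax : nat)
  (Hm : (2 <= m)%nat)
  (HW0 : forall y x, (y < n)%nat -> (x < m)%nat -> 0 <= W y x)
  (HW1 : forall x, (x < m)%nat -> lsum (seq 0 n) (fun y => W y x) = 1)
  (Hpi : forall x, (x < m)%nat -> 0 < pi x)
  (Hpi1 : lsum (inputs m) pi = 1)
  (HpiY : forall y, (y < n)%nat -> 0 < out_prob m pi W y)
  (Hr : 0 < r)
  (Ha : (alpha < n)%nat) (Hb : (beta < n)%nat) (Hab : alpha <> beta)
  (Hasmall : out_prob m pi W alpha <= 2 / INR n)
  (Hbsmall : out_prob m pi W beta <= 2 / INR n)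
  (Hxmax : is_argmax m (posterior m pi W alpha) xmax)
  (HC : in_C m (posterior m pi W alpha) (posterior m pi W beta) xmax r) :
  mutual_info m pi (seq 0 n) W
    - mutual_info m pi (merged_outs n alpha beta) (merge W alpha beta)
  <= 4 * INR m * r / INR n.
Proof.
  pose proof (HpiY alpha Ha) as Hpa. pose proof (HpiY beta Hb) as Hpb.
  rewrite mutual_info_merge_loss by assumption.
  pose proof (in_C_Rabs_sub_le m _ _ xmax r Hm (Rlt_le _ _ Hr)
                (posterior_sum m pi W alpha Hpa) Hxmax HC) as Hclose.
  eapply Rle_trans.
  { apply (lsum_le _ _ (fun _ => (out_prob m pi W alpha + out_prob m pi W beta) * r)).
    intros x Hx. apply in_seq in Hx. assert (Hxm : (x < m)%nat) by lia.
    apply merge_loss_le; auto. apply Hclose, Hxm. }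
  rewrite lsum_const. unfold inputs. rewrite length_seq.
  assert (0 < INR n) by (apply lt_0_INR; lia).
  assert (0 <= INR m) by apply pos_INR.
  replace (4 * INR m * r / INR n) with (INR m * ((2 / INR n + 2 / INR n) * r))
    by (field; lra).
  apply Rmult_le_compat_l, Rmult_le_compat_r; lra.
Qed.
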